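(* For every instance $I$ of University Dual Admission, the associated hypergraph $\mathcal{H}_I$ is a network hypergraph; in particular its incidence matrix is totally unimodular.
   Context: UDA instance: universities $U$, disjoint program sets $P_i$ for each $u_i\in U$ ($P=\bigcup_i P_i$), students $S$; an acceptable triple is $(s_j,u_i,p_{ik})$ with $p_{ik}\in P_i$ acceptable to student $s_j$. The associated hypergraph $\mathcal{H}_I$ has vertex set $S\cup U\cup P$ and one hyperedge $\{s_j,u_i,p_{ik}\}$ for each acceptable triple. The incidence matrix of a hypergraph $(V,\mathcal{E})$ is the $|V|\times|\mathcal{E}|$ 0/1 matrix with entry 1 at $(v,e)$ iff $v\in e$. A matrix $A$ is a network matrix if there is a directed graph $D=(V,E)$ and $F\subseteq E$ forming a spanning tree of $D$ in the undirected sense, such that rows of $A$ are indexed by $F$, columns by $E\setminus F$, and the entry at $(f,e)$ is $1$ if $f$ lies on the unique (undirected) cycle $C_{e,f}$ of $F\cup\{e\}$ with the same orientation as $e$ along it, $-1$ if it lies on it with opposite orientation, and $0$ if $f$ is not on it. A hypergraph is a network hypergraph if its incidence matrix is a network matrix. *)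

From HB Require Import structures.
From mathcomp Require Import all_boot all_order all_algebra.
Set Implicit Arguments. Unset Strict Implicit. Unset Printing Implicit Defensive.
Import GRing.Theory Num.Theory.
Local Open Scope ring_scope.

Section Digraph.
Variables (N Arc : finType) (tl hd : Arc -> N).

(* A dart (a, b): arc a traversed forward (tl -> hd) if b, backward otherwise. *)
Definition dsrc (d : Arc * bool) : N := if d.2 then tl d.1 else hd d.1.
Definition ddst (d : Arc * bool) : N := if d.2 then hd d.1 else tl d.1.

Fixpoint walk_ok (x : N) (s : seq (Arc * bool)) (y : N) : bool :=
  match s with
  | [::] => x == y
  | d :: s' => (dsrc d == x) && walk_ok (ddst d) s' y
  end.

Definition trail_in (F : pred Arc) (x : N) (s : seq (Arc * bool)) (y : N) : bool :=
  [&& walk_ok x s y, uniq (map fst s) & all (fun d => F d.1) s].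

Definition spanning_tree (F : pred Arc) : Prop :=
  (forall x y : N, exists s, trail_in F x s y) /\
  (forall (x : N) (s : seq (Arc * bool)), trail_in F x s x -> s = [::]).
End Digraph.

(** Rows indexed by the finite type R (tree arcs F), columns by C (arcs E \ F);
   the arc set of D is R + C.  For a non-tree arc e = (u,v), the cycle C_{e,f}
   of F + e, oriented along e, is e followed by the (unique) tree path from
   hd e = v back to tl e = u; entry (f,e) is 1 / -1 / 0 according as f is
   traversed forward / backward / not at all on that path. *)
Definition network_matrix (R C : finType) (A : R -> C -> int) : Prop :=
  exists (N : finType) (tl hd : R + C -> N),
    spanning_tree tl hd (fun a => if a is inl _ then true else false) /\
    forall e : C, exists s : seq ((R + C) * bool),
      trail_in tl hd (fun a => if a is inl _ then true else false)
               (hd (inr e)) s (tl (inr e)) /\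
      forall f : R, A f e = if (inl f, true) \in s then 1
                            else if (inl f, false) \in s then -1 else 0.

Definition incidence_matrix (V E : finType) (edge : E -> {set V}) : V -> E -> int :=
  fun v e => if v \in edge e then 1 else 0.

Definition network_hypergraph (V E : finType) (edge : E -> {set V}) : Prop :=
  network_matrix (incidence_matrix edge).

(* Total unimodularity: every square submatrix has determinant in {-1,0,1}
   (row/column selections with repetitions only add zero determinants). *)
Definition totally_unimodular (R C : finType) (A : R -> C -> int) : Prop :=
  forall (k : nat) (f : 'I_k -> R) (g : 'I_k -> C),
    \det (\matrix_(i, j) A (f i) (g j)) \in [:: -1; 0; 1].

(** Students S, universities U, programs P; [univ p] is the university whose
   program set contains p (so the P_i are disjoint and cover P); [acc s p]
   says program p is acceptable to student s, giving the acceptable triple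
   (s, univ p, p). *)
Record UDA := {
  uda_S : finType; uda_U : finType; uda_P : finType;
  uda_univ : uda_P -> uda_U;
  uda_acc : uda_S -> uda_P -> bool }.

Definition uda_vertex (I : UDA) : finType := ((uda_S I + uda_U I) + uda_P I)%type.

Definition uda_triple (I : UDA) : finType :=
  {x : (uda_S I * uda_P I)%type | @uda_acc I x.1 x.2}.

Definition uda_edge (I : UDA) (t : uda_triple I) : {set uda_vertex I} :=
  [set (inl (inl (val t).1) : uda_vertex I);
       inl (inr (@uda_univ I (val t).2));
       inr (val t).2].

From mathcomp Require Import all_boot all_order all_algebra zify ring.
Set Implicit Arguments. Unset Strict Implicit. Unset Printing Implicit Defensive.
Import GRing.Theory Num.Theory.
Local Open Scope ring_scope.

(* Add a root node and take as tree arcs root -> s for each student s,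
   u -> root for each university u, and p -> u for each program p of u.  The
   arc s -> p of a triple (s, u, p) then closes the cycle p -> u -> root -> s,
   which it traverses forwards, so its column of the network matrix is the
   incidence vector of {s, u, p}.  Acyclicity of the tree comes from one cut
   potential per tree arc, and connectivity from the walks to the root.
   Total unimodularity is proved directly: subtracting from each university
   row the rows of its programs is unimodular, and afterwards every column has
   at most one 1 among the student rows and at most one among the others, which
   is the incidence matrix of a bipartite graph. *)

Section Walks.
Variables (N Arc : finType) (tl hd : Arc -> N).
Implicit Types (F : pred Arc) (x y z : N) (s : seq (Arc * bool)).

Local Notation walk := (walk_ok tl hd).
Local Notation src := (dsrc tl hd).
Local Notation dst := (ddst tl hd).

Lemma walk_ok_cat x z y s1 s2 :
  walk x s1 z -> walk x (s1 ++ s2) y = walk z s2 y.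
Proof. by elim: s1 x => [|d s1 IH] x /=; [move/eqP-> | case/andP=> -> /IH]. Qed.

Lemma walk_ok_catP x y s1 s2 :
  walk x (s1 ++ s2) y -> exists2 z, walk x s1 z & walk z s2 y.
Proof.
elim: s1 x => [|d s1 IH] x /=; first by exists x.
by case/andP=> -> /IH[z W1 W2]; exists z.
Qed.

Definition dart_rev (d : Arc * bool) := (d.1, ~~ d.2).

Lemma walk_ok_rev x s y : walk x s y -> walk y (rev (map dart_rev s)) x.
Proof.
elim: s x => [|d s IH] x /=; first by move/eqP->.
case/andP=> /eqP <- /IH W; rewrite rev_cons -cats1 (walk_ok_cat _ _ W) /=.
by rewrite /dsrc /ddst /=; case: d.2; rewrite !eqxx.
Qed.

Lemma trail_of_walk F x s y :
  walk x s y -> all (fun d => F d.1) s -> exists t, trail_in tl hd F x t y.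
Proof.
elim: s x => [|d s IH] x /=; first by move=> xy _; exists [::]; rewrite /trail_in /= xy.
case/andP=> /eqP dx W /andP[Fd Fs]; have [t /and3P[Wt Ut Ft]] := IH _ W Fs.
have [/mapP[d' d't dd']|dNt] := boolP (d.1 \in map fst t); last first.
  by exists (d :: t); rewrite /trail_in /= dx eqxx Wt dNt Ut Fd Ft.
(* Cut the walk at the later use of the arc of d: depending on the direction
   of that use, the remaining trail starts at x just before or just after it. *)
case/splitPr: d't Wt Ut Ft => t1 t2 /walk_ok_catP[_ _] /= /andP[_ W2].
rewrite map_cat cat_uniq all_cat /= => /and3P[_ _ /andP[d'Nt2 Ut2]] /andP[_ /andP[Fd' Ft2]].
case: d {Fd W} d' dd' dx Fd' W2 d'Nt2 => a b [a' b'] /= <- <- {x} Fd' W2 aNt2.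
have [<-|/negPf nbb'] := eqVneq b' b.
  by exists ((a, b') :: t2); rewrite /trail_in /= eqxx W2 aNt2 Ut2 Fd' Ft2.
exists t2; rewrite /trail_in Ut2 Ft2 andbT.
by move: W2; rewrite /dsrc /ddst /=; case: b b' nbb' => [] [] // _ ->.
Qed.

Lemma walk_potential F (phi : N -> int) (w : Arc -> int) x s y :
  (forall a, F a -> phi (hd a) - phi (tl a) = w a) ->
  walk x s y -> all (fun d => F d.1) s ->
  phi y - phi x = \sum_(d <- s) (if d.2 then w d.1 else - w d.1).
Proof.
move=> dphi; elim: s x => [|d s IH] x /=; first by move/eqP->; rewrite big_nil subrr.
case/andP=> /eqP <- W /andP[Fd Fs]; rewrite big_cons -(IH _ W Fs) -dphi //.
by rewrite /dsrc /ddst; case: d.2; rewrite ?opprB [RHS]addrC addrA subrK.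
Qed.

Definition cut_potential F (a : Arc) (phi : N -> int) :=
  forall b, F b -> phi (hd b) - phi (tl b) = (b == a)%:R.

Lemma closed_trail_nil F :
  (forall a, F a -> exists phi, cut_potential F a phi) ->
  forall x s, trail_in tl hd F x s x -> s = [::].
Proof.
move=> cuts x [//|d s] /and3P[W /= /andP[dNs _] Fds].
have [phi dphi] := cuts _ (andP Fds).1.
have := walk_potential dphi W Fds; rewrite subrr big_cons eqxx big1_seq ?addr0.
  by case: d.2 => /esym/eqP; rewrite ?oppr_eq0 pnatr_eq0.
move=> [b b'] /andP[_ bs]; have /negPf-> : b != d.1.
  by apply: contraNneq dNs => <-; exact: (map_f fst bs).
by case: (b'); rewrite ?oppr0.
Qed.

Lemma spanning_tree_of_root F r :
  (forall x, exists2 s, walk x s r & all (fun d => F d.1) s) ->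
  (forall a, F a -> exists phi, cut_potential F a phi) ->
  spanning_tree tl hd F.
Proof.
move=> to_root cuts; split; last exact: closed_trail_nil.
move=> x y; have [sx Wx Fx] := to_root x; have [sy Wy Fy] := to_root y.
apply: (@trail_of_walk _ _ (sx ++ rev (map dart_rev sy))).
  by rewrite (walk_ok_cat _ _ Wx) walk_ok_rev.
by rewrite all_cat all_rev all_map Fx.
Qed.
End Walks.

Lemma unit_mul_unimodular (a b : int) : a \is a GRing.unit ->
  (a * b \in [:: -1; 0; 1]) = (b \in [:: -1; 0; 1]).
Proof.
case/orP=> /eqP->; rewrite ?mul1r // mulN1r !inE !eqr_oppLR opprK oppr0.
by rewrite orbC orbA [(b == 0) || _]orbC.
Qed.

Lemma det_unit_col (R : comPzRingType) n (M : 'M[R]_n) i0 j :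
  (forall i, M i j = (i == i0)%:R) -> \det M = cofactor M i0 j.
Proof.
move=> Mj; rewrite (expand_det_col _ j) (bigD1 i0) //= big1 => [|i /negPf ne].
  by rewrite Mj eqxx mul1r addr0.
by rewrite Mj ne mul0r.
Qed.

Lemma det_bipartite_incidence k (M : 'M[int]_k) (c : 'I_k -> bool) :
  (forall i j, M i j \in [:: 0; 1]) ->
  (forall j i1 i2, M i1 j = 1 -> M i2 j = 1 -> c i1 = c i2 -> i1 = i2) ->
  \det M \in [:: -1; 0; 1].
Proof.
elim: k => [|k IH] in M c *; move=> M01 Mc; first by rewrite det_mx00 !inE eqxx orbT.
have Mb i j : M i j = if M i j == 1 then 1 else 0.
  by move: (M01 i j); rewrite !inE => /orP[]/eqP->.
pose ones j := [pred i | M i j == 1].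
have [j /card1P[i0 ones_j]|no_unit_col] := pickP (fun j => #|ones j| == 1%N).
  rewrite (@det_unit_col _ _ _ i0 j) => [|i]; last first.
    by rewrite Mb; move: (ones_j i); rewrite !inE => ->; case: (i == i0).
  rewrite /cofactor unit_mul_unimodular ?unitrX ?unitrN1 //.
  apply: (IH _ (c \o lift i0)) => [a b | b a1 a2]; rewrite !mxE //.
  by move=> /Mc h1 /h1 h2 /h2 /lift_inj.
(* Otherwise every column has two 1s of different colours, or none. *)
suff /eqP-> : \det M == 0 by rewrite !inE eqxx orbT.
apply/det0P; exists (\row_i (if c i then 1 else -1)).
  apply/eqP => /rowP /(_ ord0); rewrite !mxE.
  by case: (c _) => /eqP; rewrite ?oppr_eq0 oner_eq0.
apply/rowP => j; rewrite !mxE (bigID c) /=.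
under eq_bigr => i ci do rewrite !mxE ci mul1r Mb.
under [X in _ + X]eq_bigr => i nci do rewrite !mxE (negbTE nci) mulN1r Mb.
rewrite sumrN -!big_mkcondr !sumr_const.
set P1 := [pred i | c i & M i j == 1]; set P0 := [pred i | ~~ c i & M i j == 1].
have P1_le1 : (#|P1| <= 1)%N.
  apply/card_le1_eqP => i1 i2; rewrite !inE => /andP[c1 /eqP M1] /andP[c2 /eqP M2].
  by apply/esym/(Mc _ _ _ M1 M2); rewrite c1 c2.
have P0_le1 : (#|P0| <= 1)%N.
  apply/card_le1_eqP => i1 i2; rewrite !inE => /andP[c1 /eqP M1] /andP[c2 /eqP M2].
  by apply/esym/(Mc _ _ _ M1 M2); rewrite (negbTE c1) (negbTE c2).
have P10 : (#|P1| + #|P0| = #|ones j|)%N.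
  rewrite -[#|ones j|](cardID c).
  by congr (_ + _)%N; apply: eq_card => i; rewrite !inE andbC.
have -> : #|P1| = #|P0| by move: (no_unit_col j) P10; rewrite /= => /negbT; lia.
by rewrite subrr.
Qed.

Lemma det_one_sub_sqr0 (R : comUnitRingType) n (E : 'M[R]_n) :
  E *m E = 0 -> \det (1%:M - E) \is a GRing.unit.
Proof.
move=> EE; rewrite -unitmxE; apply: (proj1 (mulmx1_unit (B := 1%:M + E) _)).
by rewrite mulmxBl !mul1mx mulmxDr mulmx1 EE addr0 addrK.
Qed.

Lemma sum_eq_codom (R : pzSemiRingType) (T : finType) (U : eqType) (f : T -> U) x :
  injective f -> \sum_a ((f a == x)%:R : R) = (x \in codom f)%:R.
Proof.
move=> f_inj; have [/codomP[a0 ->]|xNf] := boolP (x \in codom f).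
  rewrite (bigD1 a0) //= eqxx big1 ?addr0 // => a ne.
  by rewrite (inj_eq f_inj) (negbTE ne).
by rewrite big1 // => a _; case: eqP => // fa; rewrite -fa codom_f in xNf.
Qed.

Section UDAIncidence.
Variable I : UDA.
Local Notation V := (uda_vertex I).
Local Notation T := (uda_triple I).
Local Notation univ := (@uda_univ I).

Definition uda_incident (v : V) (t : T) : bool :=
  match v with
  | inl (inl s) => s == (val t).1
  | inl (inr u) => u == univ (val t).2
  | inr p => p == (val t).2
  end.

Lemma uda_incidenceE v t :
  incidence_matrix (@uda_edge I) v t = (uda_incident v t)%:R.
Proof.
rewrite /incidence_matrix /uda_edge !inE.
by case: v => [[s|u]|p]; rewrite /= -!sum_eqE /= -?sum_eqE /= ?orbF; case: eqP.
Qed.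

Definition uda_tail (a : V + T) : option V :=
  match a with
  | inl (inl (inl _)) => None
  | inl v => Some v
  | inr t => Some (inl (inl (val t).1))
  end.

Definition uda_head (a : V + T) : option V :=
  match a with
  | inl (inl (inl s)) => Some (inl (inl s))
  | inl (inl (inr _)) => None
  | inl (inr p) => Some (inl (inr (univ p)))
  | inr t => Some (inr (val t).2)
  end.

Definition tree_arc (a : V + T) : bool := if a is inl _ then true else false.

Definition uda_root_walk (n : option V) : seq ((V + T) * bool) :=
  match n with
  | None => [::]
  | Some (inl (inl s)) => [:: (inl (inl (inl s)), false)]
  | Some (inl (inr u)) => [:: (inl (inl (inr u)), true)]
  | Some (inr p) => [:: (inl (inr p), true); (inl (inl (inr (univ p))), true)]
  end.

Lemma uda_root_walk_ok n :
  walk_ok uda_tail uda_head n (uda_root_walk n) None /\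
  all (fun d => tree_arc d.1) (uda_root_walk n).
Proof. by case: n => [[[s|u]|p]|] /=; rewrite ?eqxx. Qed.

(* Deleting the tree arc of v separates [uda_subtree v] from the root. *)
Definition uda_subtree (v : V) (n : option V) : bool :=
  match v, n with
  | inl (inr u), Some (inl (inr u')) => u' == u
  | inl (inr u), Some (inr p) => univ p == u
  | _, _ => n == Some v
  end.

Definition uda_potential (v : V) (n : option V) : int :=
  if v is inl (inl _) then (uda_subtree v n)%:R else 1 - (uda_subtree v n)%:R.

Lemma uda_cut_potential v :
  cut_potential uda_tail uda_head tree_arc (inl v) (uda_potential v).
Proof.
case=> [w|//] _; case: v => [[s|u]|p]; case: w => [[s'|u']|p'] /=;
  by rewrite ?(inj_eq Some_inj) ?(inj_eq inl_inj) ?(inj_eq inr_inj); ring.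
Qed.

Definition uda_cycle (t : T) : seq ((V + T) * bool) :=
  [:: (inl (inr (val t).2), true); (inl (inl (inr (univ (val t).2))), true);
      (inl (inl (inl (val t).1)), true)].

Lemma uda_cycle_trail t :
  trail_in uda_tail uda_head tree_arc
           (uda_head (inr t)) (uda_cycle t) (uda_tail (inr t)).
Proof. by rewrite /trail_in /= !eqxx. Qed.

Lemma uda_cycle_incidence (v : V) t :
  incidence_matrix (@uda_edge I) v t =
  if (inl v, true) \in uda_cycle t then 1
  else if (inl v, false) \in uda_cycle t then -1 else 0.
Proof.
rewrite uda_incidenceE !inE /= !xpair_eqE !andbT !andbF !(inj_eq inl_inj) !orbF.
case: v => [[s|u]|p]; rewrite /= -!sum_eqE /= ?orbF;
  by rewrite ?(inj_eq inl_inj) ?(inj_eq inr_inj); case: eqP.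
Qed.

Lemma uda_network_hypergraph : network_hypergraph (@uda_edge I).
Proof.
exists (option V), uda_tail, uda_head; split.
  apply: (@spanning_tree_of_root _ _ _ _ tree_arc None) => [n|[v _|//]].
    by have [W F] := uda_root_walk_ok n; exists (uda_root_walk n).
  by exists (uda_potential v); apply: uda_cut_potential.
move=> t; exists (uda_cycle t); split; first exact: uda_cycle_trail.
by move=> v; apply: uda_cycle_incidence.
Qed.
End UDAIncidence.

Section UDAUnimodular.
Variables (I : UDA) (k : nat) (f : 'I_k -> uda_vertex I).
Hypothesis f_inj : injective f.
Local Notation univ := (@uda_univ I).

(* Subtracting from the row of each selected university the selected rows of
   its programs: left multiplication by [1 - program_merge_mx]. *)
Definition program_merge_mx : 'M[int]_k :=
  \matrix_(i, a) if f a is inr p then (f i == inl (inr (univ p)))%:R else 0.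

Lemma program_merge_mx_sqr0 : program_merge_mx *m program_merge_mx = 0.
Proof.
apply/matrixP => i b; rewrite !mxE; apply: big1 => a _; rewrite !mxE.
by case: (f a) => [v|p]; [rewrite mul0r | case: (f b) => [v|q]; rewrite ?mulr0].
Qed.

Definition reduced_incident (v : uda_vertex I) (t : uda_triple I) : bool :=
  match v with
  | inl (inr u) => (u == univ (val t).2) && (inr (val t).2 \notin codom f)
  | _ => uda_incident v t
  end.

Lemma reduced_incidenceE (g : 'I_k -> uda_triple I) i j :
  ((1%:M - program_merge_mx) *m
     \matrix_(i, j) incidence_matrix (@uda_edge I) (f i) (g j)) i j =
  (reduced_incident (f i) (g j))%:R.
Proof.
set t := val (g j); rewrite mulmxBl mul1mx !mxE.
under eq_bigr => a _ do rewrite !mxE.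
have merged a : (if f a is inr p then (f i == inl (inr (univ p)))%:R else 0) *
    incidence_matrix (@uda_edge I) (f a) (g j)
  = (f a == inr t.2)%:R * (f i == inl (inr (univ t.2)))%:R :> int.
  case: (f a) => [v|p]; first by rewrite mul0r -sum_eqE /= mul0r.
  rewrite uda_incidenceE /= (inj_eq inr_inj) -/t.
  by have [->|_] := eqVneq p t.2; rewrite mulrC // !mulr0n !mul0r.
under eq_bigr do rewrite merged.
rewrite -big_distrl /= sum_eq_codom // uda_incidenceE.
case: (f i) => [[s|u]|p] /=; rewrite ?mulr0 ?subr0 // !(inj_eq inl_inj) (inj_eq inr_inj).
by case: (u == _); case: (_ \in _); rewrite /= ?mulr1 ?mulr0 ?subrr ?subr0.
Qed.
End UDAUnimodular.

Lemma uda_totally_unimodular (I : UDA) :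
  totally_unimodular (incidence_matrix (@uda_edge I)).
Proof.
move=> k f g.
have [/injectiveP f_inj|/injectivePn[i1 [i2 ne12 f12]]] := boolP (injectiveb f); last first.
  by rewrite (determinant_alternate ne12) ?inE ?eqxx ?orbT // => j; rewrite !mxE f12.
rewrite -(unit_mul_unimodular _ (det_one_sub_sqr0 (program_merge_mx_sqr0 f))) -det_mulmx.
apply: (det_bipartite_incidence (c := fun i => if f i is inl (inl _) then true else false)).
  by move=> i j; rewrite reduced_incidenceE //; case: reduced_incident; rewrite !inE.
move=> j i1 i2; rewrite !reduced_incidenceE // => /eqP; rewrite pnatr_eq1 eqb1 => r1.
move=> /eqP; rewrite pnatr_eq1 eqb1 => r2 c12; apply: f_inj; move: r1 r2 c12.
case E1: (f i1) => [[s1|u1]|p1]; case E2: (f i2) => [[s2|u2]|p2] //=.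
- by move=> /eqP-> /eqP->.
- by move=> /andP[/eqP-> _] /andP[/eqP-> _].
- by move=> /andP[_ /negP Nf] /eqP p2E; case: Nf; rewrite -p2E -E2 codom_f.
- by move=> /eqP p1E /andP[_ /negP Nf]; case: Nf; rewrite -p1E -E1 codom_f.
- by move=> /eqP-> /eqP->.
Qed.

Theorem theorem3p2 (I : UDA) :
  network_hypergraph (@uda_edge I) /\
  totally_unimodular (incidence_matrix (@uda_edge I)).
Proof.
split; [exact: uda_network_hypergraph | exact: uda_totally_unimodular].
Qed.
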